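(* For every metric space $(X,d_X)$ with finite asymptotic dimension there exists a metric $d_X'$ on $X$ such that the identity $(X,d_X)\to(X,d_X')$ is a coarse equivalence, $\operatorname{asdim}_{AN}(X,d_X')=\operatorname{asdim}(X,d_X)$, and every asymptotic cone of $(X,d_X')$ is an ultrametric space. Moreover, if $X$ is a countable group and $d_X$ is a proper left invariant metric, then $d_X'$ can be taken to be a proper left invariant metric.
   Context: An $s$-scale chain ($s>0$) is a finite sequence $x_0,\dots,x_m$ with $d(x_i,x_{i+1})<s$; $s$-scale connected components of a subset $U$ are classes of ''joined by an $s$-scale chain inside $U$''. A nondecreasing $D\colon\mathbb{R}_+\to\mathbb{R}_+$ is an $n$-dimensional control function if for each $s>0$ there is a cover $\{\mathcal U_0,\dots,\mathcal U_n\}$ of $X$ whose members have $s$-scale components of diameter $\le D(s)$. $\operatorname{asdim}(X)\le n$ if some $n$-dimensional control function exists; $\operatorname{asdim}_{AN}(X)\le n$ if one of the form $Cs+k$ ($C>0,k\in\mathbb{R}$) exists. A map $f$ is a coarse embedding if $\rho_-(d(x,y))\le d(f(x),f(y))\le\rho_+(d(x,y))$ for nondecreasing $\rho_\pm$ with $\rho_-\to\infty$; it is a coarse equivalence if moreover its image is $K$-dense for some $K$. A metric $d_G$ on a group $G$ is proper left invariant if $d_G(gh,gk)=d_G(h,k)$ for all $g,h,k$ and every ball is finite. Asymptotic cones $\operatorname{Cone}_\omega(X,c,d)$: for a non-principal ultrafilter $\omega$ on $\mathbb{N}$, a sequence $c$ in $X$ and positive reals $d_n$ with $\lim_\omega d_n=\infty$,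 the set of sequences $(x_n)$ with $\lim_\omega d(x_n,c_n)/d_n<\infty$ with pseudometric $\lim_\omega d(x_n,y_n)/d_n$, modulo distance zero. Ultrametric: $d(x,y)\le\max\{d(x,z),d(y,z)\}$. *)

From Stdlib Require Import Reals Lra List Relations.
Open Scope R_scope.

Section Defs.
Context {X : Type}.

Definition is_metric (d : X -> X -> R) : Prop :=
  (forall x y, 0 <= d x y) /\
  (forall x y, d x y = 0 <-> x = y) /\
  (forall x y, d x y = d y x) /\
  (forall x y z, d x z <= d x y + d y z).

Definition chain_step (d : X -> X -> R) (s : R) (U : X -> Prop) (a b : X) : Prop :=
  U a /\ U b /\ d a b < s.

(* x and y are joined by an s-scale chain inside U (same s-scale component) *)
Definition scale_connected (d : X -> X -> R) (s : R) (U : X -> Prop) (x y : X) : Prop :=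
  U x /\ clos_refl_trans X (chain_step d s U) x y.

Definition components_bounded (d : X -> X -> R) (s : R) (U : X -> Prop) (B : R) : Prop :=
  forall x y, scale_connected d s U x y -> d x y <= B.

Definition control_function (d : X -> X -> R) (n : nat) (D : R -> R) : Prop :=
  (forall s t, 0 < s -> s <= t -> D s <= D t) /\
  (forall s, 0 < s -> 0 <= D s) /\
  (forall s, 0 < s ->
     exists U : nat -> X -> Prop,
       (forall x, exists i, (i <= n)%nat /\ U i x) /\
       (forall i, (i <= n)%nat -> components_bounded d s (U i) (D s))).

Definition asdim_le (d : X -> X -> R) (n : nat) : Prop :=
  exists D, control_function d n D.

Definition asdim_AN_le (d : X -> X -> R) (n : nat) : Prop :=
  exists C k : R, 0 < C /\ control_function d n (fun s => C * s + k).

Definition finite_asdim (d : X -> X -> R) : Prop := exists n, asdim_le d n.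

Definition nondecreasing_nonneg (rho : R -> R) : Prop :=
  forall u v, 0 <= u -> u <= v -> rho u <= rho v.

Definition coarse_embedding {Y : Type} (d : X -> X -> R) (d' : Y -> Y -> R) (f : X -> Y) : Prop :=
  exists rm rp : R -> R,
    nondecreasing_nonneg rm /\ nondecreasing_nonneg rp /\
    (forall M, exists t, forall u, t <= u -> M <= rm u) /\
    (forall x y, rm (d x y) <= d' (f x) (f y) /\ d' (f x) (f y) <= rp (d x y)).

Definition coarse_equivalence {Y : Type} (d : X -> X -> R) (d' : Y -> Y -> R) (f : X -> Y) : Prop :=
  coarse_embedding d d' f /\
  exists K, 0 <= K /\ forall y, exists x, d' (f x) y <= K.

End Defs.

Definition ultrafilter (w : (nat -> Prop) -> Prop) : Prop :=
  (forall A B : nat -> Prop, (forall n, A n -> B n) -> w A -> w B) /\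
  (forall A B : nat -> Prop, w A -> w B -> w (fun n => A n /\ B n)) /\
  ~ w (fun _ => False) /\
  (forall A : nat -> Prop, w A \/ w (fun n => ~ A n)).

Definition nonprincipal (w : (nat -> Prop) -> Prop) : Prop :=
  forall m : nat, ~ w (fun n => n = m).

Definition ulim (w : (nat -> Prop) -> Prop) (a : nat -> R) (L : R) : Prop :=
  forall eps, 0 < eps -> w (fun n => Rabs (a n - L) < eps).

Definition ulim_infty (w : (nat -> Prop) -> Prop) (a : nat -> R) : Prop :=
  forall M, w (fun n => M < a n).

Section Cones.
Context {X : Type}.

(* points of Cone_w(X, c, r): sequences with lim_w d(x_n, c_n)/r_n < infinity *)
Definition in_cone (d : X -> X -> R) (w : (nat -> Prop) -> Prop) (c : nat -> X)
  (r : nat -> R) (x : nat -> X) : Prop :=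
  exists L, ulim w (fun n => d (x n) (c n) / r n) L.

Definition cone_ultrametric (d : X -> X -> R) (w : (nat -> Prop) -> Prop) (c : nat -> X)
  (r : nat -> R) : Prop :=
  forall x y z : nat -> X,
    in_cone d w c r x -> in_cone d w c r y -> in_cone d w c r z ->
    forall Lxy Lxz Lyz : R,
      ulim w (fun n => d (x n) (y n) / r n) Lxy ->
      ulim w (fun n => d (x n) (z n) / r n) Lxz ->
      ulim w (fun n => d (y n) (z n) / r n) Lyz ->
      Lxy <= Rmax Lxz Lyz.

Definition all_cones_ultrametric (d : X -> X -> R) : Prop :=
  forall (w : (nat -> Prop) -> Prop) (c : nat -> X) (r : nat -> R),
    ultrafilter w -> nonprincipal w ->
    (forall n, 0 < r n) -> ulim_infty w r ->
    cone_ultrametric d w c r.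

Definition good_remetrization (d d' : X -> X -> R) : Prop :=
  is_metric d' /\
  coarse_equivalence d d' (fun x => x) /\
  (forall n, asdim_AN_le d' n <-> asdim_le d n) /\
  all_cones_ultrametric d'.

End Cones.

Section Groups.
Context {G : Type}.

Definition is_group (mul : G -> G -> G) (inv : G -> G) (e : G) : Prop :=
  (forall a b c, mul (mul a b) c = mul a (mul b c)) /\
  (forall a, mul e a = a) /\ (forall a, mul a e = a) /\
  (forall a, mul (inv a) a = e) /\ (forall a, mul a (inv a) = e).

Definition countable_type : Prop :=
  exists f : G -> nat, forall a b, f a = f b -> a = b.

Definition left_invariant (mul : G -> G -> G) (d : G -> G -> R) : Prop :=
  forall g h k, d (mul g h) (mul g k) = d h k.

Definition proper_balls (d : G -> G -> R) : Prop :=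
  forall (g : G) (rad : R), exists l : list G, forall h, d g h <= rad -> In h l.

Definition proper_left_invariant_metric (mul : G -> G -> G) (d : G -> G -> R) : Prop :=
  is_metric d /\ left_invariant mul d /\ proper_balls d.

End Groups.

From Stdlib Require Import Reals Lra Lia ZArith Relations Wf_nat.
From Stdlib Require Import Classical ClassicalEpsilon.
Open Scope R_scope.

(* Remetrizing a space of finite asymptotic dimension by a slowly growing
   step function of the distance.

   Let D be an n-dimensional control function of (X, d) with n minimal.
   Choose scales 0 = t_0 < t_1 < ... growing so fast that
   t_(k+1) >= 2 t_k + D(t_k + 1) + 1, and let phi(u) = 0 for u = 0 and
   phi(u) = 1 + k for t_k <= u < t_(k+1).  The new metric is d' = phi o d.
   - phi is nondecreasing, unbounded and satisfies
     phi(a + b) <= max(phi a, phi b) + 1 (because t_(k+1) >= 2 t_k), so d' is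
     a metric coarsely equivalent to d, and d' is an ultrametric up to the
     additive constant 1, which disappears in every asymptotic cone.
   - A cover witnessing D at scale t_K + 1 witnesses the control function
     s + 2 for d' at scale s ~ K, giving asdim_AN(d') <= n; conversely a linear
     control function for d' yields a control function for d.
   - Balls of d' lie inside balls of d, and d' is left invariant when d is, which
     gives the statement for groups. *)

Lemma nat_ceiling (s : R) : 0 < s -> exists K : nat, s <= INR K <= s + 1.
Proof.
  intros Hs. destruct (archimed s) as [Hup Hup1].
  assert (Hpos : (0 < up s)%Z) by (apply lt_0_IZR; lra).
  exists (Z.to_nat (up s)). rewrite INR_IZR_INZ, Z2Nat.id by lia. lra.
Qed.

Lemma ultrafilter_member_inhabited (w : (nat -> Prop) -> Prop) (A : nat -> Prop) :
  ultrafilter w -> w A -> exists n, A n.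
Proof.
  intros [Hsuper [_ [Hnotempty _]]] HA. apply NNPP. intros Hnone.
  apply Hnotempty. apply (Hsuper A); [|exact HA].
  intros n Hn. apply Hnone. exists n. exact Hn.
Qed.

Section MetricTransforms.
Variable X : Type.

Lemma scale_connected_transfer (d1 d2 : X -> X -> R) (s1 s2 : R) (V U : X -> Prop) :
  (forall a b, V a -> V b -> d1 a b < s1 -> d2 a b < s2) ->
  (forall z, V z -> U z) ->
  forall x y, scale_connected d1 s1 V x y -> scale_connected d2 s2 U x y.
Proof.
  intros Hstep HVU x y [Hx Hchain]. split; [auto|]. clear Hx.
  induction Hchain as [a b [Ha [Hb Hab]]| |].
  - apply rt_step. repeat split; auto.
  - apply rt_refl.
  - eapply rt_trans; eauto.
Qed.

(* A control function of dimension m is one of every larger dimension: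
   the extra members of the cover are taken empty. *)
Lemma control_function_raise_dim (d : X -> X -> R) (m n : nat) (D : R -> R) :
  control_function d m D -> (m <= n)%nat -> control_function d n D.
Proof.
  intros [Hmono [Hnonneg Hcover]] Hmn. split; [exact Hmono|split; [exact Hnonneg|]].
  intros s Hs. destruct (Hcover s Hs) as [U [HU Hbound]].
  exists (fun i x => (i <= m)%nat /\ U i x). split.
  - intros x. destruct (HU x) as [i [Hi Hx]]. exists i. split; [lia|auto].
  - intros i _ x y Hxy. pose proof Hxy as [[Him _] _].
    apply (Hbound i Him).
    eapply scale_connected_transfer; [| |exact Hxy]; auto.
    intros z [_ Hz]; exact Hz.
Qed.

Lemma compose_metric (d : X -> X -> R) (phi : R -> R) :
  is_metric d ->
  (forall u, 0 <= phi u) ->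
  (forall u, 0 <= u -> (phi u = 0 <-> u = 0)) ->
  nondecreasing_nonneg phi ->
  (forall a b, 0 <= a -> 0 <= b -> phi (a + b) <= phi a + phi b) ->
  is_metric (fun x y => phi (d x y)).
Proof.
  intros [Hnn [Hzero [Hsym Htri]]] Hphi0 Hphizero Hmono Hsub.
  split; [|split; [|split]].
  - intros x y; apply Hphi0.
  - intros x y. rewrite Hphizero by apply Hnn. apply Hzero.
  - intros x y. rewrite Hsym. reflexivity.
  - intros x y z. eapply Rle_trans; [apply Hmono; [apply Hnn|apply Htri]|].
    apply Hsub; apply Hnn.
Qed.

(* For phi nondecreasing, unbounded and vanishing at 0, the identity from d
   to phi o d is a coarse equivalence, with phi itself as both bounds. *)
Lemma compose_coarse_equivalence (d : X -> X -> R) (phi : R -> R) :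
  is_metric d -> nondecreasing_nonneg phi -> phi 0 = 0 ->
  (forall M, exists t, forall u, t <= u -> M <= phi u) ->
  coarse_equivalence d (fun x y => phi (d x y)) (fun x => x).
Proof.
  intros [_ [Hzero _]] Hmono Hphi0 Hunb. split.
  - exists phi, phi. repeat split; auto; lra.
  - exists 0. split; [lra|]. intros y. exists y.
    rewrite (proj2 (Hzero y y) eq_refl), Hphi0. lra.
Qed.

(* Sublevel sets of an unbounded nondecreasing phi are bounded, so the balls
   of phi o d lie in balls of d; in particular they stay finite. *)
Lemma compose_proper_balls (d : X -> X -> R) (phi : R -> R) :
  (forall M, exists t, forall u, t <= u -> M <= phi u) ->
  proper_balls d -> proper_balls (fun x y => phi (d x y)).
Proof.
  intros Hunb Hproper g rad. destruct (Hunb (rad + 1)) as [t Ht].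
  destruct (Hproper g t) as [l Hl]. exists l. intros h Hh. apply Hl.
  destruct (Rle_or_lt (d g h) t) as [Hle|Hgt]; [exact Hle|].
  pose proof (Ht (d g h) (Rlt_le _ _ Hgt)). lra.
Qed.

Lemma near_ultrametric_rescale (a b c K r : R) :
  0 < r -> a <= Rmax b c + K -> a / r <= Rmax (b / r) (c / r) + K / r.
Proof.
  intros Hr H.
  assert (Hmax : Rmax (b / r) (c / r) = Rmax b c / r).
  { unfold Rdiv. rewrite !(Rmult_comm _ (/ r)), RmaxRmult; [lra|].
    left. apply Rinv_0_lt_compat, Hr. }
  rewrite Hmax, <- Rdiv_plus_distr. unfold Rdiv.
  apply Rmult_le_compat_r; [left; apply Rinv_0_lt_compat|]; assumption.
Qed.

(* An ultrametric inequality up to an additive constant K becomes exact in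
   every asymptotic cone, since K / r_n tends to 0 along the ultrafilter. *)
Lemma near_ultrametric_cones (d' : X -> X -> R) (K : R) :
  (forall x y z, d' x y <= Rmax (d' x z) (d' y z) + K) ->
  all_cones_ultrametric d'.
Proof.
  intros Hnear w c r Hw _ Hr Hinf x y z _ _ _ Lxy Lxz Lyz Hxy Hxz Hyz.
  apply Rle_plus_epsilon. intros eps3 Heps3.
  set (eps := eps3 / 3). assert (Heps : 0 < eps) by (unfold eps; lra).
  destruct Hw as [Hsuper [Hinter Hrest]].
  assert (Hgood : w (fun n =>
            Rabs (d' (x n) (y n) / r n - Lxy) < eps /\
            (Rabs (d' (x n) (z n) / r n - Lxz) < eps /\
            (Rabs (d' (y n) (z n) / r n - Lyz) < eps /\ Rabs K / eps < r n)))).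
  { apply Hinter; [apply Hxy; exact Heps|].
    apply Hinter; [apply Hxz; exact Heps|].
    apply Hinter; [apply Hyz; exact Heps|apply Hinf]. }
  destruct (ultrafilter_member_inhabited w _ (conj Hsuper (conj Hinter Hrest)) Hgood)
    as [n [Ha [Hb [Hc Hrn]]]].
  apply Rabs_def2 in Ha, Hb, Hc.
  assert (HK : K / r n < eps).
  { assert (Habs : Rabs K < eps * r n).
    { replace (Rabs K) with (eps * (Rabs K / eps)) by (field; lra).
      apply Rmult_lt_compat_l; assumption. }
    replace eps with (eps * r n / r n) by (field; pose proof (Hr n); lra).
    unfold Rdiv. apply Rmult_lt_compat_r; [apply Rinv_0_lt_compat, Hr|].
    pose proof (Rle_abs K). lra. }
  pose proof (near_ultrametric_rescale _ _ _ K (r n) (Hr n) (Hnear (x n) (y n) (z n))) as Hn.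
  assert (Hmax : Rmax (d' (x n) (z n) / r n) (d' (y n) (z n) / r n) <= Rmax Lxz Lyz + eps).
  { apply Rmax_lub.
    - pose proof (Rmax_l Lxz Lyz). lra.
    - pose proof (Rmax_r Lxz Lyz). lra. }
  unfold eps in *. lra.
Qed.

End MetricTransforms.

Section Scales.
Variable D : R -> R.

Fixpoint scale_seq (k : nat) : R :=
  match k with
  | O => 0
  | S k' => 2 * scale_seq k' + Rabs (D (scale_seq k' + 1)) + 1
  end.

Lemma scale_seq_nonneg (k : nat) : 0 <= scale_seq k.
Proof.
  induction k as [|k IH]; simpl; [lra|].
  pose proof (Rabs_pos (D (scale_seq k + 1))). lra.
Qed.

Lemma scale_seq_double (k : nat) : 2 * scale_seq k + 1 <= scale_seq (S k).
Proof. simpl. pose proof (Rabs_pos (D (scale_seq k + 1))). lra. Qed.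

Lemma scale_seq_dominates (k : nat) : D (scale_seq k + 1) < scale_seq (S k).
Proof.
  simpl. pose proof (Rle_abs (D (scale_seq k + 1))). pose proof (scale_seq_nonneg k). lra.
Qed.

Lemma scale_seq_mono (i j : nat) : (i <= j)%nat -> scale_seq i <= scale_seq j.
Proof.
  induction 1 as [|j _ IH]; [lra|].
  pose proof (scale_seq_double j). pose proof (scale_seq_nonneg j). lra.
Qed.

Lemma scale_seq_lt_index (i j : nat) : scale_seq i < scale_seq j -> (i < j)%nat.
Proof.
  intros H. destruct (Nat.lt_ge_cases i j) as [Hij|Hji]; [exact Hij|].
  pose proof (scale_seq_mono _ _ Hji). lra.
Qed.

Lemma scale_seq_ge_index (k : nat) : INR k <= scale_seq k.
Proof.
  induction k as [|k IH]; [simpl; lra|]. rewrite S_INR.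
  pose proof (scale_seq_double k). pose proof (scale_seq_nonneg k). lra.
Qed.

Lemma level_exists (u : R) : 0 <= u -> exists k, scale_seq k <= u < scale_seq (S k).
Proof.
  intros Hu.
  assert (Hbelow : forall N, u < scale_seq N -> exists k, scale_seq k <= u < scale_seq (S k)).
  { induction N as [|N IH]; intros HN; [simpl in HN; lra|].
    destruct (Rlt_or_le u (scale_seq N)); [apply IH; auto|exists N; lra]. }
  destruct (INR_unbounded u) as [N HN]. apply (Hbelow N).
  pose proof (scale_seq_ge_index N). lra.
Qed.

Definition level (u : R) : nat :=
  epsilon (inhabits 0%nat) (fun k => scale_seq k <= u < scale_seq (S k)).

Lemma level_spec (u : R) : 0 <= u -> scale_seq (level u) <= u < scale_seq (S (level u)).
Proof. intros Hu. unfold level. apply epsilon_spec, level_exists, Hu. Qed.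

Lemma level_mono (u v : R) : 0 <= u -> u <= v -> (level u <= level v)%nat.
Proof.
  intros Hu Huv. pose proof (level_spec u Hu). pose proof (level_spec v ltac:(lra)).
  assert (Hlt : scale_seq (level u) < scale_seq (S (level v))) by lra.
  apply scale_seq_lt_index in Hlt. lia.
Qed.

Lemma level_lt (u : R) (j : nat) : 0 <= u -> u < scale_seq j -> (level u < j)%nat.
Proof. intros Hu Hj. pose proof (level_spec u Hu). apply scale_seq_lt_index. lra. Qed.

Lemma level_ge (u : R) (j : nat) : 0 <= u -> scale_seq j <= u -> (j <= level u)%nat.
Proof.
  intros Hu Hj. pose proof (level_spec u Hu).
  assert (Hlt : scale_seq j < scale_seq (S (level u))) by lra.
  apply scale_seq_lt_index in Hlt. lia.
Qed.

(* Since t_(j+1) >= 2 t_j + 1, a sum of two lengths goes up at most one level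
   beyond the larger of their levels. *)
Lemma level_add (a b : R) :
  0 <= a -> 0 <= b -> (level (a + b) <= S (Nat.max (level a) (level b)))%nat.
Proof.
  intros Ha Hb. set (j := S (Nat.max (level a) (level b))).
  pose proof (level_spec a Ha). pose proof (level_spec b Hb).
  assert (scale_seq (S (level a)) <= scale_seq j) by (apply scale_seq_mono; unfold j; lia).
  assert (scale_seq (S (level b)) <= scale_seq j) by (apply scale_seq_mono; unfold j; lia).
  pose proof (scale_seq_double j).
  assert (Hlt : (level (a + b) < S j)%nat) by (apply level_lt; lra). lia.
Qed.

Definition squash (u : R) : R := if Rle_dec u 0 then 0 else 1 + INR (level u).

Lemma squash_nonneg (u : R) : 0 <= squash u.
Proof. unfold squash. destruct (Rle_dec u 0); [lra|]. pose proof (pos_INR (level u)); lra. Qed.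

Lemma squash_pos (u : R) : 0 < u -> squash u = 1 + INR (level u).
Proof. intros Hu. unfold squash. destruct (Rle_dec u 0); [lra|reflexivity]. Qed.

Lemma squash_le_level (u : R) : squash u <= 1 + INR (level u).
Proof. unfold squash. destruct (Rle_dec u 0); [pose proof (pos_INR (level u))|]; lra. Qed.

Lemma squash_zero (u : R) : 0 <= u -> (squash u = 0 <-> u = 0).
Proof.
  intros Hu. unfold squash. destruct (Rle_dec u 0); split; intros; try lra.
  pose proof (pos_INR (level u)); lra.
Qed.

Lemma squash_mono : nondecreasing_nonneg squash.
Proof.
  intros u v Hu Huv. unfold squash.
  destruct (Rle_dec u 0); destruct (Rle_dec v 0);
    try (pose proof (pos_INR (level v)); lra).
  apply Rplus_le_compat_l, le_INR, level_mono; lra.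
Qed.

Lemma squash_near_ultrametric (a b : R) :
  0 <= a -> 0 <= b -> squash (a + b) <= Rmax (squash a) (squash b) + 1.
Proof.
  intros Ha Hb.
  destruct (Rle_or_lt a 0) as [Ha0|Ha0].
  { replace (a + b) with b by lra. pose proof (Rmax_r (squash a) (squash b)); lra. }
  destruct (Rle_or_lt b 0) as [Hb0|Hb0].
  { replace (a + b) with a by lra. pose proof (Rmax_l (squash a) (squash b)); lra. }
  rewrite (squash_pos (a + b)), (squash_pos a), (squash_pos b) by lra.
  pose proof (level_add a b Ha Hb) as Hlev. apply le_INR in Hlev. rewrite S_INR in Hlev.
  pose proof (Rmax_l (1 + INR (level a)) (1 + INR (level b))).
  pose proof (Rmax_r (1 + INR (level a)) (1 + INR (level b))).
  destruct (Nat.le_ge_cases (level a) (level b)) as [Hab|Hba].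
  - rewrite Nat.max_r in Hlev by exact Hab. lra.
  - rewrite Nat.max_l in Hlev by exact Hba. lra.
Qed.

(* Positive values of phi are at least 1, so the near-ultrametric inequality
   implies subadditivity. *)
Lemma squash_subadditive (a b : R) :
  0 <= a -> 0 <= b -> squash (a + b) <= squash a + squash b.
Proof.
  intros Ha Hb.
  destruct (Rle_or_lt a 0) as [Ha0|Ha0].
  { replace (a + b) with b by lra. pose proof (squash_nonneg a); lra. }
  destruct (Rle_or_lt b 0) as [Hb0|Hb0].
  { replace (a + b) with a by lra. pose proof (squash_nonneg b); lra. }
  pose proof (squash_near_ultrametric a b Ha Hb).
  rewrite (squash_pos a), (squash_pos b) in * by lra.
  pose proof (pos_INR (level a)). pose proof (pos_INR (level b)).
  pose proof (Rmax_lub (1 + INR (level a)) (1 + INR (level b))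
                (INR (level a) + (1 + INR (level b))) ltac:(lra) ltac:(lra)).
  lra.
Qed.

Lemma squash_unbounded (M : R) : exists t, forall u, t <= u -> M <= squash u.
Proof.
  destruct (INR_unbounded M) as [N HN]. exists (scale_seq N + 1).
  intros u Hu. pose proof (scale_seq_nonneg N).
  rewrite squash_pos by lra.
  pose proof (level_ge u N ltac:(lra) ltac:(lra)) as Hlev. apply le_INR in Hlev. lra.
Qed.

Lemma squash_le_nat (u : R) (K : nat) : 0 <= u -> squash u <= INR K -> u <= scale_seq K.
Proof.
  intros Hu HK. destruct (Rle_or_lt u 0) as [Hu0|Hu0].
  { pose proof (scale_seq_nonneg K). lra. }
  rewrite squash_pos in HK by exact Hu0.
  assert (Hlev : (S (level u) <= K)%nat) by (apply INR_le; rewrite S_INR; lra).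
  pose proof (level_spec u Hu). pose proof (scale_seq_mono _ _ Hlev). lra.
Qed.

Lemma squash_below_scale (u : R) (K : nat) :
  0 <= u -> u < scale_seq (S K) -> squash u <= 1 + INR K.
Proof.
  intros Hu HK. eapply Rle_trans; [apply squash_le_level|].
  apply Rplus_le_compat_l, le_INR. pose proof (level_lt u (S K) Hu HK). lia.
Qed.

End Scales.

Section Remetrization.
Variable X : Type.
Variable d : X -> X -> R.
Hypothesis d_metric : is_metric d.

Let d_nonneg : forall x y, 0 <= d x y.
Proof. apply d_metric. Qed.

Definition remetrize (D : R -> R) (x y : X) : R := squash D (d x y).

Lemma remetrize_metric (D : R -> R) : is_metric (remetrize D).
Proof.
  apply compose_metric; auto using squash_nonneg, squash_zero, squash_mono, squash_subadditive.
Qed.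

Lemma remetrize_near_ultrametric (D : R -> R) (x y z : X) :
  remetrize D x y <= Rmax (remetrize D x z) (remetrize D y z) + 1.
Proof.
  destruct d_metric as [_ [_ [Hsym Htri]]]. unfold remetrize.
  eapply Rle_trans; [apply squash_mono; [apply d_nonneg|apply (Htri x z y)]|].
  rewrite (Hsym z y). apply squash_near_ultrametric; apply d_nonneg.
Qed.

(* If D controls d in dimension n, then s + 2 controls d' in dimension n:
   use the cover for d at scale t_K + 1 with K ~ s. *)
Lemma remetrize_asdim_AN (D : R -> R) (n : nat) :
  control_function d n D -> asdim_AN_le (remetrize D) n.
Proof.
  intros [_ [_ Hcover]]. exists 1, 2. split; [lra|].
  split; [intros; lra|split; [intros; lra|]].
  intros s Hs. destruct (nat_ceiling s Hs) as [K HK].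
  pose proof (scale_seq_nonneg D K).
  destruct (Hcover (scale_seq D K + 1) ltac:(lra)) as [U [HU Hbound]].
  exists U. split; [exact HU|]. intros i Hi x y Hxy.
  assert (Hchain : scale_connected d (scale_seq D K + 1) (U i) x y).
  { eapply scale_connected_transfer; [| |exact Hxy]; auto.
    intros a b _ _ Hab. unfold remetrize in Hab.
    pose proof (squash_le_nat D (d a b) K (d_nonneg a b) ltac:(lra)). lra. }
  pose proof (Hbound i Hi x y Hchain) as Hdxy.
  pose proof (scale_seq_dominates D K).
  pose proof (squash_below_scale D (d x y) K (d_nonneg x y) ltac:(lra)).
  unfold remetrize. lra.
Qed.

(* Conversely, a linear control function C s + k for d' yields the control
   function s |-> t_(c0 (level s + 2) + k0) for d, where c0 >= C, k0 >= k. *)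
Lemma remetrize_asdim_back (D : R -> R) (n : nat) :
  asdim_AN_le (remetrize D) n -> asdim_le d n.
Proof.
  intros [C [k [HC [_ [_ Hcover]]]]].
  destruct (INR_unbounded C) as [c0 Hc0]. destruct (INR_unbounded k) as [k0 Hk0].
  set (M := fun j : nat => (c0 * (j + 2) + k0)%nat).
  assert (HMmono : forall i j, (i <= j)%nat -> (M i <= M j)%nat) by (intros; unfold M; nia).
  assert (HMR : forall j, INR (M j) = INR c0 * (INR j + 2) + INR k0).
  { intros j. unfold M. rewrite plus_INR, mult_INR, plus_INR. simpl. lra. }
  exists (fun s => scale_seq D (M (level D s))). split; [|split].
  - intros s t Hs Hst. apply scale_seq_mono, HMmono, level_mono; lra.
  - intros s _. apply scale_seq_nonneg.
  - intros s Hs. set (sg := 2 + INR (level D s)).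
    assert (Hsg : 0 < sg) by (unfold sg; pose proof (pos_INR (level D s)); lra).
    destruct (Hcover sg Hsg) as [U [HU Hbound]]. exists U. split; [exact HU|].
    intros i Hi x y Hxy.
    assert (Hchain : scale_connected (remetrize D) sg (U i) x y).
    { eapply scale_connected_transfer; [| |exact Hxy]; auto.
      intros a b _ _ Hab. unfold remetrize.
      eapply Rle_lt_trans; [apply squash_le_level|].
      assert (Hlev : (level D (d a b) <= level D s)%nat)
        by (apply level_mono; [apply d_nonneg|lra]).
      apply le_INR in Hlev. unfold sg. lra. }
    pose proof (Hbound i Hi x y Hchain) as Hb. unfold remetrize in Hb.
    apply squash_le_nat; [apply d_nonneg|].
    assert (C * sg <= INR c0 * sg) by (apply Rmult_le_compat_r; lra).
    rewrite HMR. unfold sg in *. lra.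
Qed.

Lemma remetrize_good (D : R -> R) (m : nat) :
  control_function d m D -> (forall n, asdim_le d n -> (m <= n)%nat) ->
  good_remetrization d (remetrize D).
Proof.
  intros HD Hmin. split; [apply remetrize_metric|split; [|split]].
  - apply compose_coarse_equivalence; auto using squash_mono, squash_unbounded.
    apply squash_zero; lra.
  - intros n. split; [apply remetrize_asdim_back|].
    intros Hn. apply remetrize_asdim_AN, (control_function_raise_dim _ d m); auto.
  - apply (near_ultrametric_cones _ _ 1), remetrize_near_ultrametric.
Qed.

End Remetrization.

Lemma least_asdim {X : Type} (d : X -> X -> R) :
  finite_asdim d -> exists m, asdim_le d m /\ forall n, asdim_le d n -> (m <= n)%nat.
Proof.
  intros Hfin.
  destruct (dec_inh_nat_subset_has_unique_least_element (asdim_le d)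
              (fun n => classic (asdim_le d n)) Hfin) as [m [[Hm Hleast] _]].
  exists m. split; assumption.
Qed.

Lemma remetrization_exists {X : Type} (d : X -> X -> R) :
  is_metric d -> finite_asdim d -> exists D, good_remetrization d (remetrize X d D).
Proof.
  intros Hd Hfin. destruct (least_asdim d Hfin) as [m [[D HD] Hmin]].
  exists D. apply (remetrize_good X d Hd D m HD Hmin).
Qed.

Theorem mainTheorem7 :
  (forall (X : Type) (d : X -> X -> R),
     is_metric d -> finite_asdim d ->
     exists d' : X -> X -> R, good_remetrization d d') /\
  (forall (G : Type) (mul : G -> G -> G) (inv : G -> G) (e : G) (d : G -> G -> R),
     is_group mul inv e -> @countable_type G ->
     proper_left_invariant_metric mul d -> finite_asdim d ->
     exists d' : G -> G -> R,
       good_remetrization d d' /\ proper_left_invariant_metric mul d').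
Proof.
  split.
  - intros X d Hd Hfin. destruct (remetrization_exists d Hd Hfin) as [D HD]. eauto.
  - intros G mul inv e d _ _ [Hd [Hinv Hproper]] Hfin.
    destruct (remetrization_exists d Hd Hfin) as [D HD].
    exists (remetrize G d D). split; [exact HD|].
    split; [apply remetrize_metric, Hd|split].
    + intros g h k. unfold remetrize. rewrite Hinv. reflexivity.
    + apply compose_proper_balls; [apply squash_unbounded|exact Hproper].
Qed.
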